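(* Let $m\geq 0$ and $n>1$. There is an injection from $P_2(-m+1,n)$ to $Q_2(m,n)$.
   Context: Partitions are identified with their $m$-Durfee rectangle symbols, defined as follows. - For a partition $\lambda$ of $n$ with $\ell(\lambda)>m$ parts, let $j\geq1$ be the largest integer with $\lambda_{m+j}\geq j$. Let $\alpha$ be the partition whose $i$-th part is the number of $k\leq m+j$ with $\lambda_k\geq j+i$ (the columns right of the $(m+j)\times j$ rectangle). Let $\beta=(\lambda_{m+j+1},\lambda_{m+j+2},\ldots)$ (the rows below the rectangle). - If $\ell(\lambda)\leq m$, set $j=0$, $\alpha=\lambda'$ (the conjugate) and $\beta=\emptyset$. The symbol is written $(\alpha,\beta)_{(m+j)\times j}$, with $\ell(\cdot)$ denoting number of parts. The first part of an empty sequence is taken to be $0$. $P(-m+1,n)$ is the set of partitions of $n$ with rank (largest part minus number of parts) at least $-m+1$. $P_2(-m+1,n)$ is the set of those $(\alpha,\beta)_{(m+j)\times j}\in P(-m+1,n)$ with $j\geq1$ and $\beta_1=j-1$. The rank-set of $\lambda=(\lambda_1,\ldots,\lambda_\ell)$ is $[-\lambda_1,1-\lambda_2,\ldots,\ell-1-\lambda_\ell,\ell,\ell+1,\ldots]$. $Q(m,n)$ is the set of partitions of $n$ whose rank-set contains $m$. $Q_2(m,n)$ is the set of $(\gamma,\delta)_{(m+j')\times j'}\in Q(m,n)$ with $j'\geq1$, $\ell(\delta)-\ell(\gamma)\geq 0$ and $\gamma_1<m+j'$. *)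

From mathcomp Require Import all_boot all_order all_algebra.
Set Implicit Arguments. Unset Strict Implicit. Unset Printing Implicit Defensive.
Import Order.TTheory GRing.Theory Num.Theory.

(* Partitions are represented as seq nat listing the parts in
   nonincreasing order; the i-th part (1-indexed) is  nth 0 l i.-1 . *)

Definition part (l : seq nat) (i : nat) : nat := nth 0 l i.-1.

Definition is_partition (n : nat) (l : seq nat) : bool :=
  [&& sorted geq l, all (fun x => 0 < x) l & sumn l == n].

Definition conj_part (l : seq nat) : seq nat :=
  [seq count (fun x => i <= x) l | i <- iota 1 (head 0 l)].

(* j of the m-Durfee rectangle: largest j >= 1 with l_{m+j} >= j
   (0 if l has at most m parts; such j always satisfy j <= size l). *)
Definition durfee_j (m : nat) (l : seq nat) : nat :=
  if m < size l then
    \max_(1 <= j < (size l).+1 | j <= part l (m + j)) j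
  else 0.

(* alpha: i-th part = #{k <= m+j : l_k >= j+i}; nonzero exactly for
   i = 1 .. l_1 - j. *)
Definition durfee_alpha (m : nat) (l : seq nat) : seq nat :=
  if m < size l then
    let j := durfee_j m l in
    [seq count (fun x => j + i <= x) (take (m + j) l) | i <- iota 1 (head 0 l - j)]
  else conj_part l.

Definition durfee_beta (m : nat) (l : seq nat) : seq nat :=
  if m < size l then drop (m + durfee_j m l) l else [::].

Definition rank (l : seq nat) : int := (head 0 l)%:Z - (size l)%:Z.

Definition inP (m n : nat) (l : seq nat) : bool :=
  is_partition n l && ((1 - m%:Z)%R <= rank l)%R.

Definition inP2 (m n : nat) (l : seq nat) : bool :=
  [&& inP m n l, 1 <= durfee_j m l & head 0 (durfee_beta m l) == (durfee_j m l).-1].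

(* rank-set of l = [-l_1, 1-l_2, ..., ell-1-l_ell, ell, ell+1, ...];
   r is in it iff r = k-1-l_k for some 1 <= k <= ell, or r >= ell. *)
Definition in_rank_set (r : int) (l : seq nat) : bool :=
  [|| has (fun k => r == ((k%:Z - 1) - (part l k)%:Z)%R) (iota 1 (size l))
    | ((size l)%:Z <= r)%R].

Definition inQ (m n : nat) (l : seq nat) : bool :=
  is_partition n l && in_rank_set m%:Z l.

Definition inQ2 (m n : nat) (l : seq nat) : bool :=
  [&& inQ m n l, 1 <= durfee_j m l,
      size (durfee_alpha m l) <= size (durfee_beta m l)
    & head 0 (durfee_alpha m l) < m + durfee_j m l].

From mathcomp Require Import all_boot all_order all_algebra.
From mathcomp Require Import zify.

Set Implicit Arguments.
Unset Strict Implicit.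
Unset Printing Implicit Defensive.

(* For lambda in P_2(-m+1, n) with m-Durfee rectangle (m+j) x j, delete the
   first row (lambda_1 cells), insert a row of length j right after row m+j
   and add a column of lambda_1 - j cells below it:
     f(lambda) = (lambda_2, ..., lambda_{m+j}, j, lambda_{m+j+1} + 1, ...),
   a partition with exactly lambda_1 + m parts, padded with 1s.  Since
   lambda_{m+j+1} = j - 1 the new row and the row under it both have length
   j, so the m-Durfee rectangle of f(lambda) is still (m+j) x j.  Its part
   m+j+1 equals j, so m lies in the rank-set; its part m+j equals j, so
   alpha_1 < m + j; and l(alpha) = f(lambda)_1 - j <= lambda_1 - j = l(beta).
   The rank condition lambda_1 + m > l(lambda) makes the added column longer
   than the part of lambda below the rectangle, so no part of lambda is lost:
   lambda_1 = l(f(lambda)) - m, and the other parts of lambda are read back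
   from f(lambda) and j by shifting (and, below the rectangle, subtracting 1). *)

Lemma nth_sorted_geq (s : seq nat) i k :
  sorted geq s -> i <= k -> nth 0 s k <= nth 0 s i.
Proof.
move=> s_sorted le_ik; have [lt_ks | le_sk] := ltnP k (size s); last first.
  by rewrite nth_default.
apply: (sorted_leq_nth (fun _ _ _ le_yx le_zy => leq_trans le_zy le_yx) leqnn) => //.
by rewrite inE; apply: leq_ltn_trans lt_ks.
Qed.

Lemma nth_gt0_size (s : seq nat) i : 0 < nth 0 s i -> i < size s.
Proof. by apply: contraLR; rewrite -!leqNgt => /(nth_default 0) ->. Qed.

Lemma sumn_nth (s : seq nat) N :
  size s <= N -> sumn s = \sum_(0 <= i < N) nth 0 s i.
Proof.
move=> le_sN; rewrite sumnE (big_nth 0) (big_cat_nat (leq0n _) le_sN) /=.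
rewrite [X in _ + X]big1_seq ?addn0 // => i /andP[_].
by rewrite mem_index_iota => /andP[/(nth_default 0)].
Qed.

Lemma eq_from_nth_gt0 (s1 s2 : seq nat) :
  all (fun x => 0 < x) s1 -> all (fun x => 0 < x) s2 ->
  nth 0 s1 =1 nth 0 s2 -> s1 = s2.
Proof.
have size_le s t : all (fun x => 0 < x) s -> nth 0 s =1 nth 0 t -> size s <= size t.
  move=> /(all_nthP 0) s_gt0 eq_st; rewrite leqNgt; apply/negP => /s_gt0.
  by rewrite eq_st nth_default.
move=> s1_gt0 s2_gt0 eq12; apply: (eq_from_nth (x0 := 0)) => [|i _]; last exact: eq12.
by apply/eqP; rewrite eqn_leq size_le // size_le // fsym.
Qed.

Lemma count_take_lt (T : Type) (p : pred T) x0 (s : seq T) a i :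
  i < a -> ~~ p (nth x0 s i) -> count p (take a s) < a.
Proof.
move=> lt_ia not_pi; have [lt_is | le_si] := ltnP i (size s); last first.
  by apply: leq_ltn_trans (count_size _ _) _; rewrite size_take_min; lia.
have: ~~ all p (take a s).
  apply: contra not_pi => /(all_nthP x0)/(_ i).
  by rewrite nth_take // size_take_min; apply; lia.
by rewrite all_count; have := count_size p (take a s); rewrite size_take_min; lia.
Qed.

Lemma bigmax_seq_pred (r : seq nat) (P : pred nat) :
  0 < \max_(i <- r | P i) i -> P (\max_(i <- r | P i) i).
Proof.
elim: r => [|x r IHr]; first by rewrite big_nil.
by rewrite big_cons; case: ifP => // Px; rewrite /maxn; case: ifP.
Qed.

Lemma durfee_j_gt0 m l : 0 < durfee_j m l -> m < size l.
Proof. by rewrite /durfee_j; case: ifP. Qed.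

Lemma durfee_j_le_part m l :
  0 < durfee_j m l -> durfee_j m l <= part l (m + durfee_j m l).
Proof. by rewrite /durfee_j; case: ifP => // _; apply: bigmax_seq_pred. Qed.

Lemma durfee_jE m l j : sorted geq l -> 0 < j ->
  j <= part l (m + j) -> part l (m + j).+1 <= j -> durfee_j m l = j.
Proof.
rewrite /part /= => l_sorted j_gt0 le_j_part le_part_j.
have lt_size : (m + j).-1 < size l by apply: nth_gt0_size; apply: leq_trans le_j_part.
rewrite /durfee_j ifT; last by lia.
apply/eqP; rewrite eqn_leq; apply/andP; split.
  apply/bigmax_leqP_seq => i _; rewrite /part => le_i_part.
  by have := @nth_sorted_geq l (m + j) (m + i).-1 l_sorted; lia.
by apply: (leq_bigmax_seq (F := fun i => i)); rewrite ?mem_index_iota //; lia.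
Qed.

Lemma head_durfee_beta m l :
  m < size l -> head 0 (durfee_beta m l) = part l (m + durfee_j m l).+1.
Proof. by move=> lt_ml; rewrite /durfee_beta lt_ml -nth0 nth_drop addn0. Qed.

Lemma size_durfee_alpha m l :
  m < size l -> size (durfee_alpha m l) = head 0 l - durfee_j m l.
Proof. by move=> lt_ml; rewrite /durfee_alpha lt_ml size_map size_iota. Qed.

Lemma size_durfee_beta m l :
  m < size l -> size (durfee_beta m l) = size l - (m + durfee_j m l).
Proof. by move=> lt_ml; rewrite /durfee_beta lt_ml size_drop. Qed.

Lemma head_durfee_alpha_lt m l i : m < size l ->
  i < m + durfee_j m l -> nth 0 l i <= durfee_j m l ->
  head 0 (durfee_alpha m l) < m + durfee_j m l.
Proof.
move=> lt_ml lt_ia le_lj; rewrite /durfee_alpha lt_ml /=.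
case: (head 0 l - durfee_j m l) => [|k] /=; first lia.
by apply: (count_take_lt (x0 := 0) lt_ia); rewrite -ltnNge addn1 ltnS.
Qed.

Lemma in_rank_set_part l k r :
  0 < k <= size l -> r + part l k = k.-1 -> in_rank_set r%:Z l.
Proof.
move=> k_range def_r; apply/orP; left; apply/hasP; exists k.
  by rewrite mem_iota; lia.
by apply/eqP; lia.
Qed.

Definition p2_to_q2 (m : nat) (l : seq nat) : seq nat :=
  let j := durfee_j m l in
  mkseq (fun i => if i.+1 < m + j then nth 0 l i.+1
                  else if i.+1 == m + j then j else (nth 0 l i).+1)
        (head 0 l + m).

Lemma size_p2_to_q2 m l : size (p2_to_q2 m l) = head 0 l + m.
Proof. exact: size_mkseq. Qed.

Section P2ToQ2.

Variables (m n : nat) (l : seq nat).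
Hypothesis l_P2 : inP2 m n l.

Local Notation j := (durfee_j m l).
Local Notation f := (p2_to_q2 m l).

Lemma P2_partition : is_partition n l.
Proof. by case/and3P: l_P2 => /andP[]. Qed.

Lemma P2_sorted : sorted geq l.
Proof. by case/and3P: P2_partition. Qed.

Lemma P2_gt0 : all (fun x => 0 < x) l.
Proof. by case/and3P: P2_partition. Qed.

Lemma P2_size_lt : size l < head 0 l + m.
Proof. by case/and3P: l_P2 => /andP[_]; rewrite /rank; lia. Qed.

Lemma P2_j_gt0 : 0 < j.
Proof. by case/and3P: l_P2. Qed.

Lemma P2_m_lt_size : m < size l.
Proof. exact: durfee_j_gt0 P2_j_gt0. Qed.

Lemma P2_j_le_nth_rect : j <= nth 0 l (m + j).-1.
Proof. exact: durfee_j_le_part P2_j_gt0. Qed.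

Lemma P2_nth_below_rect : nth 0 l (m + j) = j.-1.
Proof.
by case/and3P: l_P2 => _ _ /eqP; rewrite head_durfee_beta ?P2_m_lt_size.
Qed.

Lemma P2_rect_le_size : m + j <= size l.
Proof.
have := nth_gt0_size (leq_trans P2_j_gt0 P2_j_le_nth_rect); have := P2_j_gt0; lia.
Qed.

Lemma P2_j_lt_head : j < head 0 l.
Proof. by have := P2_rect_le_size; have := P2_size_lt; lia. Qed.

Lemma nth_p2_to_q2_above i : i.+1 < m + j -> nth 0 f i = nth 0 l i.+1.
Proof.
by move=> lt_ia; rewrite nth_mkseq /= ?lt_ia //; have := P2_j_lt_head; lia.
Qed.

Lemma nth_p2_to_q2_row : nth 0 f (m + j).-1 = j.
Proof.
have j_gt0 := P2_j_gt0; have lt_j_head := P2_j_lt_head.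
by rewrite nth_mkseq /=; [rewrite ifF ?ifT | ]; lia.
Qed.

Lemma nth_p2_to_q2_below i :
  m + j <= i < head 0 l + m -> nth 0 f i = (nth 0 l i).+1.
Proof. by case/andP=> le_ai lt_iN; rewrite nth_mkseq //= !ifF //; lia. Qed.

Lemma p2_to_q2_sorted : sorted geq f.
Proof.
have l_sorted := P2_sorted; have j_gt0 := P2_j_gt0.
apply/(sortedP 0) => i; rewrite size_p2_to_q2 => lt_iN.
have [lt_ia | le_ai] := ltnP i.+2 (m + j).
  rewrite /= (nth_p2_to_q2_above lt_ia) (nth_p2_to_q2_above (ltnW lt_ia)).
  exact: nth_sorted_geq.
have [le_ai' | lt_ia'] := leqP (m + j) i.
  rewrite /= !nth_p2_to_q2_below ?ltnS; [exact: nth_sorted_geq | lia ..].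
have [def_i | def_i] : i.+1 = (m + j).-1 \/ i = (m + j).-1 by lia.
  have lt_i1a : i.+1 < m + j by lia.
  by rewrite (nth_p2_to_q2_above lt_i1a) def_i nth_p2_to_q2_row; apply: P2_j_le_nth_rect.
rewrite def_i nth_p2_to_q2_row nth_p2_to_q2_below; last by have := P2_j_lt_head; lia.
by rewrite (_ : (m + j).-1.+1 = m + j) ?P2_nth_below_rect; lia.
Qed.

Lemma p2_to_q2_gt0 : all (fun x => 0 < x) f.
Proof.
have j_gt0 := P2_j_gt0.
apply/(all_nthP 0) => i; rewrite size_p2_to_q2 => lt_iN.
have [lt_ia | le_ai] := ltnP i.+1 (m + j); last first.
  have [le_ai' | lt_ia] := leqP (m + j) i; first by rewrite nth_p2_to_q2_below ?le_ai'.
  by rewrite (_ : i = (m + j).-1) ?nth_p2_to_q2_row //; lia.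
rewrite nth_p2_to_q2_above //; apply: leq_trans j_gt0 (leq_trans P2_j_le_nth_rect _).
by apply: nth_sorted_geq P2_sorted _; lia.
Qed.

Lemma sumn_p2_to_q2 : sumn f = n.
Proof.
have [_ _ /eqP <-] := and3P P2_partition.
have j_gt0 := P2_j_gt0; have lt_j_head := P2_j_lt_head.
have [k def_a] : exists k, m + j = k.+1 by exists (m + j).-1; lia.
have le_aN : k.+1 <= head 0 l + m by lia.
rewrite !(@sumn_nth _ (head 0 l + m)) ?size_p2_to_q2 //; last first.
  by have := P2_size_lt; lia.
rewrite !(big_cat_nat (leq0n _) le_aN) /= big_nat_recr // big_nat_recl //=.
have sum_above : \sum_(0 <= i < k) nth 0 f i = \sum_(0 <= i < k) nth 0 l i.+1.
  by apply: eq_big_nat => i /andP[_ lt_ik]; apply: nth_p2_to_q2_above; lia.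
have sum_below : \sum_(k.+1 <= i < head 0 l + m) nth 0 f i =
    \sum_(k.+1 <= i < head 0 l + m) nth 0 l i + (head 0 l + m - k.+1).
  rewrite -[X in _ = _ + X]muln1 -sum_nat_const_nat -big_split /=.
  by apply: eq_big_nat => i le_iN; rewrite addn1 nth_p2_to_q2_below //; lia.
have row_k : nth 0 f k = j by rewrite -[k]/(k.+1.-1) -def_a nth_p2_to_q2_row.
by rewrite sum_above sum_below row_k nth0; lia.
Qed.

Lemma durfee_j_p2_to_q2 : durfee_j m f = j.
Proof.
have j_gt0 := P2_j_gt0; have lt_j_head := P2_j_lt_head.
rewrite (durfee_jE p2_to_q2_sorted j_gt0) // /part ?nth_p2_to_q2_row //=.
by rewrite nth_p2_to_q2_below ?P2_nth_below_rect //; lia.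
Qed.

Lemma head_p2_to_q2_le : head 0 f <= head 0 l.
Proof.
rewrite -!nth0; have [lt_1a | le_a1] := ltnP 1 (m + j).
  by rewrite nth_p2_to_q2_above //; apply: nth_sorted_geq P2_sorted _.
have def0 : 0 = (m + j).-1 by have := P2_j_gt0; lia.
by rewrite [X in nth 0 f X]def0 nth_p2_to_q2_row nth0 ltnW // P2_j_lt_head.
Qed.

Lemma p2_to_q2_Q2 : inQ2 m n f.
Proof.
have j_gt0 := P2_j_gt0; have lt_j_head := P2_j_lt_head.
have lt_m_size : m < size f by rewrite size_p2_to_q2; lia.
apply/and4P; split; rewrite ?durfee_j_p2_to_q2 //.
- apply/andP; split.
    by apply/and3P; split; rewrite ?p2_to_q2_sorted ?p2_to_q2_gt0 ?sumn_p2_to_q2.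
  apply: (in_rank_set_part (k := (m + j).+1)); first by rewrite size_p2_to_q2; lia.
  by rewrite /part /= nth_p2_to_q2_below ?P2_nth_below_rect //; lia.
- rewrite size_durfee_alpha // size_durfee_beta // size_p2_to_q2 durfee_j_p2_to_q2.
  by have := head_p2_to_q2_le; lia.
- have := head_durfee_alpha_lt (i := (m + j).-1) lt_m_size.
  by rewrite durfee_j_p2_to_q2 nth_p2_to_q2_row; apply; lia.
Qed.

Lemma nth_P2_from_p2_to_q2 i :
  nth 0 l i.+1 = if i.+1 < m + j then nth 0 f i else (nth 0 f i.+1).-1.
Proof.
case: ifP => [/nth_p2_to_q2_above -> // | /negbT]; rewrite -leqNgt => le_ai.
have [lt_iN | le_Ni] := ltnP i.+1 (head 0 l + m).
  by rewrite nth_p2_to_q2_below ?le_ai.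
by rewrite !nth_default ?size_p2_to_q2 //; have := P2_size_lt; lia.
Qed.

End P2ToQ2.

Lemma p2_to_q2_inj m n : {in inP2 m n &, injective (p2_to_q2 m)}.
Proof.
move=> l1 l2 l1_P2 l2_P2 eq_f.
have eq_j : durfee_j m l1 = durfee_j m l2.
  by rewrite -(durfee_j_p2_to_q2 l1_P2) eq_f (durfee_j_p2_to_q2 l2_P2).
have eq_head : head 0 l1 = head 0 l2.
  by have := congr1 size eq_f; rewrite !size_p2_to_q2; lia.
apply: eq_from_nth_gt0 (P2_gt0 l1_P2) (P2_gt0 l2_P2) _ => -[|i]; first by rewrite !nth0.
by rewrite (nth_P2_from_p2_to_q2 l1_P2) (nth_P2_from_p2_to_q2 l2_P2) eq_f eq_j.
Qed.

Theorem lemma2p5 (m n : nat) (hn : 1 < n) :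
  exists f : seq nat -> seq nat,
    (forall l, inP2 m n l -> inQ2 m n (f l)) /\
    {in inP2 m n &, injective f}.
Proof.
exists (p2_to_q2 m); split; [exact: p2_to_q2_Q2 | exact: p2_to_q2_inj].
Qed.
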